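(* Let $M=(Q,\mathcal{A},\Delta,I,F)$ be a globally mintermised symbolic finite automaton and let $N=(Q,\mathbb{P}_\Delta,\Delta,I,F)$ be its syntactic NFA. Then $\preceq_M = \preceq_N$.
   Context: An effective Boolean algebra is $\mathcal{A}=(\mathfrak{D},\mathbb{P},[\![\cdot]\!],\vee,\wedge,\neg)$ where $\mathbb{P}$ is a set of predicates closed under $\vee,\wedge,\neg$, and $[\![\cdot]\!]:\mathbb{P}\to 2^{\mathfrak{D}}$ satisfies $[\![\varphi\vee\psi]\!]=[\![\varphi]\!]\cup[\![\psi]\!]$, $[\![\varphi\wedge\psi]\!]=[\![\varphi]\!]\cap[\![\psi]\!]$, $[\![\neg\varphi]\!]=\mathfrak{D}\setminus[\![\varphi]\!]$; $\mathit{IsSat}(\varphi)$ means $[\![\varphi]\!]\neq\emptyset$, and all operations and $\mathit{IsSat}$ are computable. A symbolic finite automaton (SFA) is $M=(Q,\mathcal{A},\Delta,I,F)$ with finite state set $Q$, a finite transition relation $\Delta\subseteq Q\times\mathbb{P}\times Q$ whose predicates are all satisfiable, initial states $I$ and final states $F$. Its concrete transitions are $[\![\Delta]\!]=\{(q,a,p)\mid (q,\psi,p)\in\Delta,\ a\in[\![\psi]\!]\}$. Let $\mathbb{P}_\Delta=\{\varphi\mid \exists p,q:(p,\varphi,q)\in\Delta\}$. A set of predicates is a partition if the denotations of any two distinct members are disjoint. $M$ is globally mintermised if $\mathbb{P}_\Delta$ is a partition. The syntactic NFA of $M$ is $(Q,\mathbb{P}_\Delta,\Delta,I,F)$, i.e.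 the NFA over the finite alphabet $\mathbb{P}_\Delta$ whose transitions are those of $\Delta$ with predicates treated as plain (syntactic) letters. A relation $S\subseteq Q\times Q$ is a simulation on the SFA $M$ if whenever $(p,r)\in S$: (C1) $p\in F$ implies $r\in F$; (C2) for all $a\in\mathfrak{D}$ and $p'$ with $(p,a,p')\in[\![\Delta]\!]$ there is $r'$ with $(r,a,r')\in[\![\Delta]\!]$ and $(p',r')\in S$. For an NFA (finite alphabet $\Sigma$, transitions $\Delta\subseteq Q\times\Sigma\times Q$), simulation is defined the same way with $a$ ranging over $\Sigma$ and the transitions of $\Delta$. $\preceq_M$ (resp. $\preceq_N$) denotes the unique maximal simulation on $M$ (resp. $N$). *)

From Stdlib Require Import List.
Import ListNotations.

Record EBA := {
  dom : Type;
  pred : Type;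
  den : pred -> dom -> Prop;
  por : pred -> pred -> pred;
  pand : pred -> pred -> pred;
  pnot : pred -> pred;
  den_or : forall f g a, den (por f g) a <-> (den f a \/ den g a);
  den_and : forall f g a, den (pand f g) a <-> (den f a /\ den g a);
  den_not : forall f a, den (pnot f) a <-> ~ den f a;
  isSat : pred -> bool;
  isSat_spec : forall f, isSat f = true <-> exists a, den f a
}.

Record SFA (A : EBA) := {
  state : Type;
  states : list state;
  states_full : forall q, In q states;         (* Q is finite *)
  delta : list (state * pred A * state);
  delta_sat : forall q f p, In (q, f, p) delta -> exists a, den A f a;
  init : state -> Prop;
  final : state -> Prop
}.
Arguments state {A}.
Arguments delta {A}.
Arguments init {A}.
Arguments final {A}.

Definition concrete_trans {A : EBA} (M : SFA A) (q : state M) (a : dom A) (p : state M) : Prop :=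
  exists f, In (q, f, p) (delta M) /\ den A f a.

Definition P_Delta {A : EBA} (M : SFA A) (f : pred A) : Prop :=
  exists p q, In (p, f, q) (delta M).

Definition is_partition {A : EBA} (S : pred A -> Prop) : Prop :=
  forall f g, S f -> S g -> f <> g -> forall a, ~ (den A f a /\ den A g a).

Definition globally_mintermised {A : EBA} (M : SFA A) : Prop :=
  is_partition (P_Delta M).

Definition is_sim_SFA {A : EBA} (M : SFA A) (S : state M -> state M -> Prop) : Prop :=
  forall p r, S p r ->
    (final M p -> final M r) /\
    (forall a p', concrete_trans M p a p' ->
       exists r', concrete_trans M r a r' /\ S p' r').

(* The syntactic NFA N = (Q, P_Delta, Delta, I, F): alphabet is P_Delta,
   letters are predicates compared syntactically, transitions are Delta. *)
Definition is_sim_synNFA {A : EBA} (M : SFA A) (S : state M -> state M -> Prop) : Prop :=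
  forall p r, S p r ->
    (final M p -> final M r) /\
    (forall f p', P_Delta M f -> In (p, f, p') (delta M) ->
       exists r', In (r, f, r') (delta M) /\ S p' r').

Definition max_sim_SFA {A : EBA} (M : SFA A) (p r : state M) : Prop :=
  exists S, is_sim_SFA M S /\ S p r.

Definition max_sim_synNFA {A : EBA} (M : SFA A) (p r : state M) : Prop :=
  exists S, is_sim_synNFA M S /\ S p r.

(* A syntactic transition on a predicate f is matched by the concrete transitions on
   any letter of [[f]], which exists since f is satisfiable. Conversely, when the
   predicates of Delta are pairwise disjoint, a concrete transition on a letter a
   of [[f]] can only be matched through the predicate f itself; so both kinds of
   simulation are the same relations, and so are their unions. *)
From Stdlib Require Import List Classical.

Lemma P_Delta_of_trans {A : EBA} (M : SFA A) q f p :
  In (q, f, p) (delta M) -> P_Delta M f.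
Proof. intros Hin; exists q, p; exact Hin. Qed.

Lemma mintermised_pred_eq {A : EBA} (M : SFA A) f g a :
  globally_mintermised M -> P_Delta M f -> P_Delta M g ->
  den A f a -> den A g a -> f = g.
Proof.
  intros Hpart Hf Hg Hfa Hga.
  apply NNPP; intros Hne.
  exact (Hpart f g Hf Hg Hne a (conj Hfa Hga)).
Qed.

Lemma sim_synNFA_sim_SFA {A : EBA} (M : SFA A) S :
  is_sim_synNFA M S -> is_sim_SFA M S.
Proof.
  intros HS p r Spr.
  destruct (HS p r Spr) as [Hfin Hstep]; split; [exact Hfin|].
  intros a p' [f [Hin Hfa]].
  destruct (Hstep f p' (P_Delta_of_trans M _ _ _ Hin) Hin) as [r' [Hr' Sp'r']].
  exists r'; split; [exists f; split; assumption | exact Sp'r'].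
Qed.

Lemma sim_SFA_sim_synNFA {A : EBA} (M : SFA A) S :
  globally_mintermised M -> is_sim_SFA M S -> is_sim_synNFA M S.
Proof.
  intros Hpart HS p r Spr.
  destruct (HS p r Spr) as [Hfin Hstep]; split; [exact Hfin|].
  intros f p' Hf Hin.
  destruct (delta_sat A M _ _ _ Hin) as [a Hfa].
  destruct (Hstep a p' (ex_intro _ f (conj Hin Hfa))) as [r' [[g [Hr' Hga]] Sp'r']].
  assert (Hfg : f = g)
    by exact (mintermised_pred_eq M f g a Hpart Hf (P_Delta_of_trans M _ _ _ Hr') Hfa Hga).
  subst g.
  exists r'; split; assumption.
Qed.

Theorem lemma2 (A : EBA) (M : SFA A) :
  globally_mintermised M ->
  forall p r : state M, max_sim_SFA M p r <-> max_sim_synNFA M p r.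
Proof.
  intros Hpart p r; split; intros [S [HS Spr]]; exists S; split; try exact Spr.
  - exact (sim_SFA_sim_synNFA M S Hpart HS).
  - exact (sim_synNFA_sim_SFA M S HS).
Qed.
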